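(* Let $p \geq 5$ be a prime and let $G$ be a group of order $p^7$ of nilpotency class $5$ such that $\gamma_2(G)$ is elementary abelian of order $p^5$. Then: (i) $|\gamma_5(G)| = p$; (ii) $|\operatorname{Z}(G/\gamma_5(G))| = p^2$ and $|\operatorname{Z}_2(G)| = p^3$; (iii) $\operatorname{K}(G) \neq \gamma_2(G)$; (iv) the commutator length of $G$ is $2$.
   Context: For a group $G$, $[x,y] = x^{-1}y^{-1}xy$, $\operatorname{K}(G) = \{[a,b] \mid a,b \in G\}$, $\gamma_i(G)$ is the $i$-th term of the lower central series, $\operatorname{Z}(G)$ the center and $\operatorname{Z}_2(G)$ the second term of the upper central series. The commutator length of $G$ is the smallest positive integer $m$ such that every element of $\gamma_2(G)$ is a product of at most $m$ commutators in $G$. *)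

From mathcomp Require Import all_boot all_fingroup all_solvable.
Set Implicit Arguments.
Unset Strict Implicit.
Unset Printing Implicit Defensive.
Import GroupScope.
Local Open Scope group_scope.

Definition commutator_set (gT : finGroupType) (G : {set gT}) : {set gT} :=
  [set [~ a, b] | a in G, b in G].

Definition prod_of_commutators_le (gT : finGroupType) (G : {set gT})
    (m : nat) (x : gT) : Prop :=
  exists s : seq (gT * gT),
    [/\ size s <= m, all (fun c => (c.1 \in G) && (c.2 \in G)) s
      & x = \prod_(c <- s) [~ c.1, c.2]].

Definition commutator_width_le (gT : finGroupType) (G : {set gT}) (m : nat)
  : Prop := forall x, x \in 'L_2(G) -> prod_of_commutators_le G m x.

Definition commutator_length_is (gT : finGroupType) (G : {set gT}) (m : nat)
  : Prop :=
  [/\ 0 < m, commutator_width_le G m &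
      forall k, 0 < k -> k < m -> ~ commutator_width_le G k].

From mathcomp Require Import all_boot all_fingroup all_solvable.
Import GroupScope.
Set Implicit Arguments.
Unset Strict Implicit.
Unset Printing Implicit Defensive.

(* Write A = G' = L_2.  As A is abelian, each g in G acts on A by the
   endomorphism u |-> [u, g]; these maps commute, and if G = <a, b> then
   [B, G] = [B, a] [B, b] for every B <= A normal in G.  With the class-5
   condition this yields |L_3| = p^4, |L_4| = p^2 and |L_5| = p, and the
   preimage Q of Z(G / L_5) has order p^3 with Q <= Z_2(G) < L_3.
   For a noncommutator, take c = [a, b] and e with [c, e] in Q \ L_4.  Then
   [L_3, e] <= L_5, so [A, e] has order at most p^2, and <[c, e]> L_4, of
   order p^3, has an element t outside L_4 and [A, e].  A commutator in
   L_3 \ L_4 is some [u, f] with u in A; if it were t, then e and f would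
   generate G and force L_3 <= <[c, e]> L_4, which is too small.  Finally
   every x in A is [a, h] [u, a] [v, b] = [a, h u^-1] [b, v^-1]. *)

Lemma mem_commg_lcn (gT : finGroupType) (G : {group gT}) n u g :
  u \in 'L_n.+1(G) -> g \in G -> [~ u, g] \in 'L_n.+2(G).
Proof. by move=> Lu Gg; rewrite lcnSn mem_commg. Qed.

Lemma commg1G_subP (gT : finGroupType) (G H : {group gT}) x :
  reflect {in G, forall g, [~ x, g] \in H} ([~: [set x], G] \subset H).
Proof.
rewrite gen_subG; apply: (iffP subsetP) => [sxH g Gg | xH].
  by apply: sxH; rewrite imset2_f ?set11.
by move=> _ /imset2P[y g /set1P-> Gg ->]; apply: xH.
Qed.

Lemma cycle_join_lcn_norm (gT : finGroupType) (G : {group gT}) k x :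
  x \in 'L_k.+1(G) -> G \subset 'N(<[x]> <*> 'L_k.+2(G)).
Proof.
move=> Lx; rewrite -commg_subr commGC; apply: subset_trans (joing_subr _ _).
by rewrite {2}lcnSn commSg // join_subG cycle_subG Lx lcn_subS.
Qed.

Lemma card_cycle_joinl (gT : finGroupType) (H : {group gT}) x :
  x \in 'N(H) -> #|<[x]> <*> H| <= #[x] * #|H|.
Proof.
move=> nHx; rewrite norm_joinEl ?cycle_subG // orderE mul_cardG.
by rewrite leq_pmulr ?cardG_gt0.
Qed.

Lemma lcn_subS_strict (gT : finGroupType) (G : {group gT}) k :
  nilpotent G -> 0 < k <= nil_class G -> ~~ ('L_k(G) \subset 'L_k.+1(G)).
Proof.
move=> nilG /andP[]; case: k => // k _ le_k_c; apply/negP=> sLkS.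
have sLk m : 'L_k.+1(G) \subset 'L_(m + k).+1(G).
  elim: m => // m IHm; apply: subset_trans sLkS _.
  by rewrite addSn !lcnSn commSg.
have := sLk (nil_class G - k); rewrite subnK; last exact: ltnW.
rewrite (lcn_nil_classP _ nilG (leqnn _)) subG1 => /eqP Lk1.
case def_c: (nil_class G) le_k_c => [|c] // le_k_c.
have /(lcn_nil_classP c nilG) : 'L_c.+1(G) = 1.
  by apply/trivgP; rewrite -Lk1 lcn_sub_leq.
by rewrite def_c ltnn.
Qed.

Lemma not_commutator_width1 (gT : finGroupType) (G : {group gT}) t :
  t \in 'L_2(G) -> t != 1 -> t \notin commutator_set G ->
  ~ commutator_width_le G 1.
Proof.
move=> Lt t_neq1 notKt /(_ t Lt)[s [size_s alls def_t]].
case: s size_s alls def_t => [|[g h] [|? ?]] //= _.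
  by rewrite big_nil => _ def_t; rewrite def_t eqxx in t_neq1.
rewrite andbT big_cons big_nil mulg1 => /andP[Gg Gh] def_t.
by case/negP: notKt; rewrite def_t imset2_f.
Qed.

Lemma ucnSP (gT : finGroupType) (G : {group gT}) n x :
  reflect (x \in G /\ {in G, forall g, [~ x, g] \in 'Z_n(G)})
          (x \in 'Z_n.+1(G)).
Proof.
rewrite ucnSnR inE.
by apply: (iffP andP) => [[Gx /commg1G_subP] | [Gx /commg1G_subP]].
Qed.

Lemma commg_center (gT : finGroupType) (G : {group gT}) x g :
  x \in 'Z(G) -> g \in G -> [~ x, g] = 1.
Proof. by rewrite -ucn1 => /ucnSP[_ xG1] /xG1; rewrite ucn0 => /set1P. Qed.

Section MorphimCard.
Variables (aT rT : finGroupType) (D : {group aT}) (f : {morphism D >-> rT}).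

Lemma card_morphim_ker (H : {group aT}) : H \subset D ->
  #|H| = (#|f @* H| * #|H :&: 'ker f|)%N.
Proof.
move=> sHD; rewrite card_morphim (setIidPr sHD) -indexgI mulnC.
by rewrite Lagrange // subsetIl.
Qed.

Lemma card_morphim_subset (H K : {group aT}) : H \subset K -> K \subset D ->
  #|f @* K| * #|H| <= #|K| * #|f @* H|.
Proof.
move=> sHK sKD; rewrite (card_morphim_ker (subset_trans sHK sKD)).
rewrite (card_morphim_ker sKD) [X in _ <= X]mulnAC -mulnA !leq_mul2l.
by rewrite subset_leq_card ?setSI ?orbT.
Qed.

Lemma card_morphpre_mul (H : {group aT}) (K M : {group rT}) :
  H \subset D -> f @* H \subset M -> K \subset M ->
  #|H| * #|K| <= #|M| * #|H :&: f @*^-1 K|.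
Proof.
move=> sHD sfHM sKM; have sPD : H :&: f @*^-1 K \subset D.
  by rewrite subIset ?sHD.
have defPker : H :&: f @*^-1 K :&: 'ker f = H :&: 'ker f.
  by rewrite -setIA (setIidPr (ker_sub_pre f K)).
rewrite (card_morphim_ker sHD) (card_morphim_ker sPD) defPker morphim_setIpre.
rewrite mulnAC mul_cardG -mulnA leq_mul //.
by rewrite subset_leq_card // mul_subG.
Qed.

End MorphimCard.

Section PGroupCounting.
Variables (gT : finGroupType) (p : nat) (G : {group gT}).
Hypotheses (pr_p : prime p) (pG : p.-group G).

Lemma card_pgroup_ltn (H : {group gT}) n :
  H \subset G -> p ^ n < #|H| -> p ^ n.+1 <= #|H|.
Proof.
move=> sHG; rewrite (card_pgroup (pgroupS sHG pG)).
by rewrite !ltn_exp2l ?leq_exp2l ?prime_gt1.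
Qed.

Lemma proper_card_pgroup (H K : {group gT}) :
  K \subset G -> H \proper K -> p * #|H| <= #|K|.
Proof.
move=> sKG ltHK; have pK := pgroupS sKG pG.
have pH := pgroupS (proper_sub ltHK) pK.
rewrite (card_pgroup pK) (card_pgroup pH) -expnS leq_exp2l ?prime_gt1 //.
exact: properG_ltn_log.
Qed.

Lemma lcn_sub_cycle_join k x : x \in 'L_k(G) -> x \notin 'L_k.+1(G) ->
  #|'L_k(G)| <= p * #|'L_k.+1(G)| -> 'L_k(G) \subset <[x]> <*> 'L_k.+1(G).
Proof.
move=> Lx notLx le_Lk; set M := <[x]> <*> 'L_k.+1(G).
have sMLk : M \subset 'L_k(G) by rewrite join_subG cycle_subG Lx lcn_subS.
have ltLM : 'L_k.+1(G) \proper M.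
  rewrite properE joing_subr; apply: contra notLx => /subsetP; apply.
  exact: subsetP (joing_subl _ _) x (cycle_id x).
have := proper_card_pgroup (subset_trans sMLk (lcn_sub k G)) ltLM.
move/(leq_trans le_Lk) => le_LkM.
have [_ <-] := subset_leqif_card sMLk.
by rewrite eqn_leq le_LkM subset_leq_card.
Qed.

End PGroupCounting.

Section Metabelian.
Variables (gT : finGroupType) (G : {group gT}).
Local Notation A := 'L_2(G).

Lemma mem_commg_lcn2 x g : x \in G -> g \in G -> [~ x, g] \in A.
Proof. by move=> Gx Gg; rewrite lcn2 derg1 mem_commg. Qed.

Lemma lcn2_commg_lcn2 u g : u \in A -> g \in G -> [~ u, g] \in A.
Proof. by move=> /(subsetP (lcn_sub 2 G)); apply: mem_commg_lcn2. Qed.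

Lemma memJ_lcn2 u g : u \in A -> g \in G -> u ^ g \in A.
Proof. by move=> Au Gg; rewrite memJ_norm // (subsetP (lcn_norm 2 G)). Qed.

Lemma cycle_norm_lcn k f : f \in G -> <[f]> \subset 'N('L_k(G)).
Proof. by move=> Gf; rewrite cycle_subG (subsetP (lcn_norm k G)). Qed.

Hypothesis cAA : abelian A.

Lemma conjg_lcn2 u v : u \in A -> v \in A -> u ^ v = u.
Proof. by move=> Au Av; rewrite /conjg (centsP cAA u Au v Av) mulKg. Qed.

Lemma commg_lcn2 u v : u \in A -> v \in A -> [~ u, v] = 1.
Proof. by move=> Au Av; rewrite commgEl conjg_lcn2 // mulVg. Qed.

Lemma commg_lcn2_morphM g :
  g \in G -> {in A &, {morph (fun u => [~ u, g]) : u v / u * v}}.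
Proof.
by move=> Gg u v Au Av /=; rewrite commMgJ conjg_lcn2 // lcn2_commg_lcn2.
Qed.

Definition comm_morph g (Gg : g \in G) : {morphism A >-> gT} :=
  Morphism (commg_lcn2_morphM Gg).

Lemma comm_morphE g (Gg : g \in G) u : comm_morph Gg u = [~ u, g].
Proof. by []. Qed.

Lemma conjRg_lcn2 u g h : u \in A -> g \in G -> h \in G ->
  [~ u, g] ^ h = [~ u ^ h, g].
Proof.
move=> Au Gg Gh; have Auh := memJ_lcn2 Au Gh; have Agh := mem_commg_lcn2 Gg Gh.
rewrite conjRg (conjg_mulR g h) commgMJ commg_lcn2 // mul1g.
by rewrite conjg_lcn2 // lcn2_commg_lcn2.
Qed.

(* A is a module over the abelian group G / A. *)
Lemma commg_lcn2C u g h : u \in A -> g \in G -> h \in G ->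
  [~ u, g, h] = [~ u, h, g].
Proof.
move=> Au Gg Gh; rewrite [LHS]commgEl conjRg_lcn2 // -!(comm_morphE Gg).
by rewrite -morphV // -morphM ?groupV ?memJ_lcn2 // -commgEl.
Qed.

Lemma comm_morphim_lcn2 g (Gg : g \in G) (B : {set gT}) :
  comm_morph Gg @* B \subset A.
Proof.
by apply/subsetP=> _ /morphimP[u Au _ ->]; rewrite comm_morphE lcn2_commg_lcn2.
Qed.

Lemma comm_morphim_norm g (Gg : g \in G) (B : {group gT}) :
  B \subset A -> G \subset 'N(B) -> G \subset 'N(comm_morph Gg @* B).
Proof.
move=> sBA nBG; apply/normsP=> h Gh; apply/eqP.
rewrite eqEcard cardJg leqnn andbT; apply/subsetP=> y.
rewrite mem_conjg => /morphimP[u Au Bu]; rewrite comm_morphE => def_y.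
rewrite -(conjgKV h y) def_y conjRg_lcn2 //.
by rewrite -comm_morphE mem_morphim ?memJ_lcn2 // memJ_norm ?(subsetP nBG).
Qed.

Lemma commgX_morphim f (Gf : f \in G) u k :
  u \in A -> [~ u, f ^+ k] \in comm_morph Gf @* A.
Proof.
move=> Au; elim: k => [|k IHk]; first by rewrite commg1 group1.
rewrite expgSr commgMJ groupM //; first by rewrite -comm_morphE mem_morphim.
by rewrite memJ_norm // (subsetP (comm_morphim_norm Gf _ (lcn_norm 2 G))).
Qed.

(* Modulo A, <[f]> <*> A is cyclic, so its commutators come from [A, f] only. *)
Lemma commg_cycle_join f (Gf : f \in G) x y :
  x \in <[f]> <*> A -> y \in <[f]> <*> A -> [~ x, y] \in comm_morph Gf @* A.
Proof.
rewrite norm_joinEl ?cycle_norm_lcn //.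
case/mulsgP=> _ u /cycleP[i ->] Au ->; case/mulsgP=> _ v /cycleP[j ->] Av ->.
have Gfj : f ^+ j \in G by rewrite groupX.
have Gv : v \in G by apply: subsetP Av; apply: lcn_sub.
have Gfjv : f ^+ j * v \in G by rewrite groupM.
rewrite commMgJ (conjg_lcn2 (mem_commg_lcn2 (groupX i Gf) Gfjv) Au).
rewrite (commgMJ u) commg_lcn2 // mul1g conjg_lcn2 ?lcn2_commg_lcn2 //.
have /commgP/eqP cfij := commuteX2 i j (commute_refl f).
rewrite (commgMJ (f ^+ i)) cfij conj1g mulg1.
by rewrite -invgR groupM ?groupV ?commgX_morphim.
Qed.

Lemma commg_cycle_lcn_mem (N : {group gT}) g (Gg : g \in G) u k w :
  0 < k -> u \in A -> w \in <[u]> <*> 'L_k.+1(G) ->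
  [~ u, g] \in N -> 'L_k.+2(G) \subset N -> [~ w, g] \in N.
Proof.
move=> k_gt0 Au; have Gu : u \in G by apply: subsetP Au; apply: lcn_sub.
rewrite norm_joinEl ?cycle_norm_lcn //.
case/mulsgP=> _ r /cycleP[i ->] Lr -> uN sLN.
have Ar : r \in A by apply: subsetP Lr; apply: lcn_sub_leq.
rewrite -(comm_morphE Gg) morphM ?groupX // morphX // groupM ?groupX //.
by rewrite comm_morphE (subsetP sLN) // mem_commg_lcn.
Qed.

Lemma commg_mul_group_set x (N : {group gT}) : x \in G -> N \subset A ->
  {in G &, forall h g, [~ x, h, g] \in N} ->
  group_set ([set [~ x, f] | f in G] * N).
Proof.
move=> Gx sNA xGGN; apply/group_setP; split.
  by rewrite -[1]mulg1 mem_mulg // -(commg1 x) imset_f.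
move=> _ _ /mulsgP[_ r /imsetP[f Gf ->] Nr ->]
  /mulsgP[_ s /imsetP[g Gg ->] Ns ->].
have [Ar As] := (subsetP sNA r Nr, subsetP sNA s Ns).
have [Axf Axg] := (mem_commg_lcn2 Gx Gf, mem_commg_lcn2 Gx Gg).
have Nk : [~ x, f, g] \in N by apply: xGGN.
have commgM_inv : [~ x, f] * [~ x, g] = [~ x, f * g] * [~ x, f, g]^-1.
  by rewrite commgMJ conjg_mulR -[RHS]mulgA mulgK (centsP cAA _ Axf _ Axg).
have mulgACA (u v w z : gT) : commute v w -> u * v * (w * z) = u * w * (v * z).
  by move=> cvw; rewrite -!mulgA (mulgA v) cvw -mulgA.
rewrite (mulgACA _ _ _ _ (centsP cAA r Ar _ Axg)) commgM_inv -mulgA.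
by rewrite mem_mulg ?imset_f ?groupM ?groupV.
Qed.

Lemma commgV_lcn2 u g : u \in A -> g \in G -> [~ g, u^-1] = [~ u, g].
Proof.
by move=> Au Gg; rewrite -invgR -(comm_morphE Gg u^-1) morphV // invgK.
Qed.

End Metabelian.

Section TwoGenerated.
Variables (gT : finGroupType) (G : {group gT}) (a b : gT).
Hypothesis genG : <<[set a; b]>> = G.
Local Notation A := 'L_2(G).

Lemma mem_gen2l : a \in G. Proof. by rewrite -genG mem_gen ?set21. Qed.
Lemma mem_gen2r : b \in G. Proof. by rewrite -genG mem_gen ?set22. Qed.

Lemma gen2_ind (P : pred gT) : P 1 ->
  {in G &, forall x y, P x -> P y -> P (x * y)} -> P a -> P b ->
  {in G, forall x, P x}.
Proof.
move=> P1 PM Pa Pb; have gP : group_set [set x in G | P x].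
  apply/group_setP; split=> [|x y]; first by rewrite inE group1 P1.
  by rewrite !inE => /andP[Gx Px] /andP[Gy Py]; rewrite groupM ?PM.
have: G \subset Group gP.
  by rewrite -{1}genG gen_subG subUset !sub1set !inE mem_gen2l mem_gen2r Pa Pb.
by move/subsetP=> sGP x /sGP; rewrite inE => /andP[].
Qed.

Lemma commg_gen2_mem (H : {group gT}) x : G \subset 'N(H) ->
  [~ x, a] \in H -> [~ x, b] \in H -> {in G, forall g, [~ x, g] \in H}.
Proof.
move=> nHG xaH xbH; apply: gen2_ind => // [|g h _ Gh xgH xhH].
  by rewrite commg1 group1.
by rewrite commgMJ groupM // memJ_norm ?(subsetP nHG).
Qed.

Lemma lcn2_sub_gen2 (N : {group gT}) : G \subset 'N(N) -> [~ a, b] \in N ->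
  A \subset N.
Proof.
move=> nNG abN; pose P x := [forall y in G, [~ x, y] \in N].
have Pgen x : [~ x, a] \in N -> [~ x, b] \in N -> P x.
  by move=> xaN xbN; apply/forall_inP; apply: commg_gen2_mem.
have PG : {in G, forall x, P x}.
  apply: gen2_ind => [|x y Gx Gy /forall_inP Px /forall_inP Py||].
  - by apply/forall_inP=> y _; rewrite comm1g group1.
  - apply/forall_inP=> z Gz; rewrite commMgJ groupM ?Py //.
    by rewrite memJ_norm ?Px ?(subsetP nNG).
  - by apply: Pgen; rewrite ?commgg ?group1.
  by apply: Pgen; rewrite ?commgg ?group1 // -invgR groupV.
rewrite lcn2 derg1 gen_subG; apply/subsetP=> _ /imset2P[x y Gx Gy ->].
by have /forall_inP-> := PG x Gx.
Qed.

Hypothesis cAA : abelian A.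

Lemma mem_commR_gen2 (B : {group gT}) x : B \subset A -> G \subset 'N(B) ->
  x \in [~: B, G] ->
  exists2 u, u \in B & exists2 v, v \in B & x = [~ u, a] * [~ v, b].
Proof.
move=> sBA nBG; have [Ga Gb] := (mem_gen2l, mem_gen2r).
pose J := comm_morph cAA Ga @* B <*> comm_morph cAA Gb @* B.
have nJG : G \subset 'N(J) by rewrite normsY ?comm_morphim_norm.
have sRJ : [~: B, G] \subset J.
  rewrite gen_subG; apply/subsetP=> _ /imset2P[u g Bu Gg ->].
  have Au := subsetP sBA u Bu.
  apply: (commg_gen2_mem nJG) => //.
    by rewrite mem_gen ?inE // -(comm_morphE cAA Ga) mem_morphim ?orTb.
  by rewrite mem_gen ?inE // -(comm_morphE cAA Gb) mem_morphim ?orbT.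
move/(subsetP sRJ); rewrite /J comm_joingE; last first.
  by apply: centC; apply: (centSS _ _ cAA); apply: comm_morphim_lcn2.
case/mulsgP=> _ _ /morphimP[u _ Bu ->] /morphimP[v _ Bv ->] ->.
by exists u => //; exists v.
Qed.

Lemma mem_lcn3_gen2 x : x \in 'L_3(G) ->
  exists2 u, u \in A & exists2 v, v \in A & x = [~ u, a] * [~ v, b].
Proof. by rewrite lcnSn; apply: mem_commR_gen2 (subxx A) (lcn_norm 2 G). Qed.

Lemma lcn_cycle_join_step n s : 0 < n -> s \in A -> [~ s, b] \in 'L_n.+1(G) ->
  'L_n.+1(G) \subset <[ [~ s, a] ]> <*> 'L_n.+2(G) ->
  'L_n.+2(G) \subset <[ [~ s, a, a] ]> <*> 'L_n.+3(G).
Proof.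
move=> n_gt0 As sbL sLn1; have [Ga Gb] := (mem_gen2l, mem_gen2r).
set t := [~ s, a]; set N := <[ [~ t, a] ]> <*> 'L_n.+3(G).
have At : t \in A by rewrite lcn2_commg_lcn2.
have taN : [~ t, a] \in N by rewrite mem_gen ?inE ?cycle_id.
have commN u g :
    g \in G -> u \in 'L_n.+1(G) -> [~ t, g] \in N -> [~ u, g] \in N.
  move=> Gg Lu tgN.
  apply: (commg_cycle_lcn_mem cAA Gg (u := t) (k := n.+1)) => //.
    exact: subsetP Lu.
  exact: joing_subr.
have sLA : 'L_n.+1(G) \subset A by apply: lcn_sub_leq.
apply/subsetP=> x; rewrite lcnSn.
case/(mem_commR_gen2 sLA (lcn_norm _ _))=> u Lu [v Lv ->].
have tbN : [~ t, b] \in N by rewrite /t (commg_lcn2C cAA As Ga Gb) commN.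
by rewrite groupM // commN.
Qed.

End TwoGenerated.

Section Proposition33.
Variables (gT : finGroupType) (G : {group gT}) (p : nat).
Hypotheses (pr_p : prime p) (oG : #|G| = (p ^ 7)%N).
Hypotheses (cl5 : nil_class G = 5) (eA : p.-abelem 'L_2(G)).
Hypothesis oA : #|'L_2(G)| = (p ^ 5)%N.
Local Notation A := 'L_2(G).

Lemma pgroupG : p.-group G.
Proof. by rewrite /pgroup oG pnatX pnat_id. Qed.

Lemma nilpotentG : nilpotent G. Proof. exact: pgroup_nil pgroupG. Qed.

Lemma lcn2_abelian : abelian A. Proof. by case/(abelemP pr_p): eA. Qed.

Lemma order_lcn2 x : x \in A -> #[x] %| p.
Proof. by case/(abelemP pr_p): eA => _ expA Ax; rewrite order_dvdn expA. Qed.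

Lemma card_cycle_lcn2_join x k : x \in A ->
  #|<[x]> <*> 'L_k(G)| <= p * #|'L_k(G)|.
Proof.
move=> Ax; apply: leq_trans (card_cycle_joinl _) _.
  by rewrite (subsetP (lcn_norm k G)) // (subsetP (lcn_sub 2 G)).
by rewrite leq_mul2r dvdn_leq ?prime_gt0 ?order_lcn2 ?orbT.
Qed.

Lemma lcn6_eq1 : 'L_6(G) = 1.
Proof. by apply/(lcn_nil_classP 5 nilpotentG); rewrite cl5. Qed.

Lemma lcn5_neq1 : 'L_5(G) != 1.
Proof. by apply/eqP=> /(lcn_nil_classP 4 nilpotentG); rewrite cl5. Qed.

Lemma lcn_strict k : 0 < k <= 5 -> ~~ ('L_k(G) \subset 'L_k.+1(G)).
Proof. by rewrite -cl5; apply: lcn_subS_strict nilpotentG. Qed.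

Lemma commg_lcn5 u g : u \in 'L_5(G) -> g \in G -> [~ u, g] = 1.
Proof.
by move=> Lu Gg; have := mem_commg_lcn Lu Gg; rewrite lcn6_eq1 => /set1P.
Qed.

Lemma cycle_join_lcn2_proper f : f \in G -> ~~ (G \subset <[f]> <*> A).
Proof.
move=> Gf; apply/negP=> sGfA; have/negP[] := lcn_strict (k := 2) isT.
rewrite lcn2 derg1 gen_subG; apply/subsetP=> _ /imset2P[x y Gx Gy ->].
have [Mx My] := (subsetP sGfA x Gx, subsetP sGfA y Gy).
have /morphimP[u _ Au ->] := commg_cycle_join lcn2_abelian Gf Mx My.
by rewrite comm_morphE mem_commg_lcn.
Qed.

(* As A = G' lies in the Frattini subgroup, two elements generate G as soon as
   they generate G modulo A, i.e., span the group G/A of order p^2. *)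
Lemma gen2_of_notin g h : g \in G -> h \in G -> g \notin A ->
  h \notin <[g]> <*> A -> <<[set g; h]>> = G.
Proof.
move=> Gg Gh notAg notMh; set M1 := <[g]> <*> A; set M2 := <[h]> <*> M1.
have sM1G : M1 \subset G by rewrite join_subG cycle_subG Gg lcn_sub.
have sM2G : M2 \subset G by rewrite join_subG cycle_subG Gh.
have ltAM1 : A \proper M1.
  rewrite properE joing_subr; apply: contra notAg => /subsetP; apply.
  exact: subsetP (joing_subl _ _) g (cycle_id g).
have ltM1M2 : M1 \proper M2.
  rewrite properE joing_subr; apply: contra notMh => /subsetP; apply.
  exact: subsetP (joing_subl _ _) h (cycle_id h).
have defM2 : M2 = G.
  have le_AM1 := proper_card_pgroup pr_p pgroupG sM1G ltAM1.
  have le_M1M2 := proper_card_pgroup pr_p pgroupG sM2G ltM1M2.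
  apply/eqP; rewrite eqEcard sM2G oG (leq_trans _ le_M1M2) //.
  by rewrite expnS leq_mul2l (leq_trans _ le_AM1) ?orbT // oA -expnS.
apply: Phi_nongen; apply/eqP; rewrite eqEsubset join_subG Phi_sub.
rewrite subUset !sub1set Gg Gh -{1}defM2 !join_subG !cycle_subG /=.
have sAPhi : A \subset 'Phi(G) by rewrite (Phi_joing pgroupG) lcn2 joing_subl.
rewrite (subset_trans sAPhi (joing_subl _ _)) andbT.
by rewrite !(subsetP (joing_subr _ _)) ?set21 ?set22.
Qed.

Lemma exists_gen2 : exists a b, <<[set a; b]>> = G.
Proof.
have /subsetPn[a Ga notAa] : ~~ (G \subset A).
  by apply/negP=> /subset_leq_card; rewrite oG oA leq_exp2l ?prime_gt1.
have /subsetPn[b Gb notMb] := cycle_join_lcn2_proper Ga.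
by exists a, b; apply: gen2_of_notin.
Qed.

Lemma commg_gen2_notin_lcn3 g h : <<[set g; h]>> = G -> [~ g, h] \notin 'L_3(G).
Proof.
move=> genG; apply/negP=> ghL3; have/negP[] := lcn_strict (k := 2) isT.
by apply: (lcn2_sub_gen2 genG (lcn_norm 3 G)).
Qed.

Lemma mem_lcn2_of_commg x : x \in G -> {in G, forall g, [~ x, g] \in 'L_3(G)} ->
  x \in A.
Proof.
move=> Gx xGL3; apply: contraT => notAx.
have /subsetPn[h Gh notMh] := cycle_join_lcn2_proper Gx.
have/negP[] := commg_gen2_notin_lcn3 (gen2_of_notin Gx Gh notAx notMh).
exact: xGL3.
Qed.

Lemma commg_lcn3_cycle_join g h : g \in G -> h \in G -> [~ g, h] \in 'L_3(G) ->
  exists2 f, f \in G & (g \in <[f]> <*> A) && (h \in <[f]> <*> A).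
Proof.
have Mf f : f \in <[f]> <*> A by apply: subsetP (joing_subl _ _) f (cycle_id f).
have AM f x : x \in A -> x \in <[f]> <*> A by apply: subsetP (joing_subr _ _) x.
move=> Gg Gh ghL3; have [Ag | notAg] := boolP (g \in A).
  by exists h; rewrite ?Mf ?AM.
have [Mh | notMh] := boolP (h \in <[g]> <*> A); first by exists g; rewrite ?Mf.
by have/negP[] := commg_gen2_notin_lcn3 (gen2_of_notin Gg Gh notAg notMh).
Qed.

Lemma lcn2_sub_cycle_commg a b : <<[set a; b]>> = G ->
  A \subset <[ [~ a, b] ]> <*> 'L_3(G).
Proof.
move=> genG; have Lab := mem_commg_lcn2 (mem_gen2l genG) (mem_gen2r genG).
apply: (lcn2_sub_gen2 genG (cycle_join_lcn_norm (k := 1) Lab)).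
exact: subsetP (joing_subl _ _) _ (cycle_id _).
Qed.

Lemma card_lcn3 : #|'L_3(G)| = (p ^ 4)%N.
Proof.
have [a [b genG]] := exists_gen2; have p_gt0 := prime_gt0 pr_p.
have ltL3A : 'L_3(G) \proper A by rewrite properE lcn_subS lcn_strict.
have Ac := mem_commg_lcn2 (mem_gen2l genG) (mem_gen2r genG).
have le_A_M := subset_leq_card (lcn2_sub_cycle_commg genG).
apply/eqP; rewrite eqn_leq -(leq_pmul2l p_gt0) -expnS -oA.
rewrite (proper_card_pgroup pr_p pgroupG (lcn_sub 2 G) ltL3A) /=.
rewrite -(leq_pmul2l p_gt0) -expnS -oA (leq_trans le_A_M) //.
exact: card_cycle_lcn2_join.
Qed.

Lemma lcn2_sub_cycle_join u : u \in A -> u \notin 'L_3(G) ->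
  A \subset <[u]> <*> 'L_3(G).
Proof.
move=> Au notL3u; apply: (lcn_sub_cycle_join pr_p pgroupG Au notL3u).
by rewrite card_lcn3 oA.
Qed.

Lemma lcn3_sub_commg a b (N : {group gT}) u v : <<[set a; b]>> = G ->
  u \in A -> u \notin 'L_3(G) -> v \in A -> v \notin 'L_3(G) ->
  'L_4(G) \subset N -> [~ u, a] \in N -> [~ v, b] \in N -> 'L_3(G) \subset N.
Proof.
move=> genG Au notL3u Av notL3v sL4N uaN vbN.
have [Ga Gb] := (mem_gen2l genG, mem_gen2r genG).
apply/subsetP=> x /(mem_lcn3_gen2 genG lcn2_abelian)[u1 Au1 [u2 Au2 ->]].
rewrite groupM //.
  apply: (commg_cycle_lcn_mem lcn2_abelian Ga (k := 2)) uaN sL4N => //.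
  exact: subsetP (lcn2_sub_cycle_join Au notL3u) u1 Au1.
apply: (commg_cycle_lcn_mem lcn2_abelian Gb (k := 2)) vbN sL4N => //.
exact: subsetP (lcn2_sub_cycle_join Av notL3v) u2 Au2.
Qed.

(* If |L_4| >= p^3, then L_3 = <[ [~ s, a] ]> L_4, and two steps of
   lcn_cycle_join_step give |L_4| <= p * |L_5| <= p^2. *)
Lemma card_lcn4_le_of_commg a b s : <<[set a; b]>> = G -> s \in A ->
  [~ s, a] \notin 'L_4(G) -> [~ s, b] \in 'L_3(G) -> #|'L_4(G)| <= p ^ 2.
Proof.
move=> genG As notL4t sbL3; have Ga := mem_gen2l genG.
set t := [~ s, a]; have At : t \in A := lcn2_commg_lcn2 As Ga.
have L3t : t \in 'L_3(G) by apply: mem_commg_lcn.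
rewrite leqNgt; apply/negP.
move=> /(card_pgroup_ltn pr_p pgroupG (lcn_sub 4 G)) le_p3_L4.
have sL3M : 'L_3(G) \subset <[t]> <*> 'L_4(G).
  apply: (lcn_sub_cycle_join pr_p pgroupG L3t notL4t).
  by rewrite card_lcn3 expnS leq_mul2l le_p3_L4 orbT.
have sL4M := lcn_cycle_join_step genG lcn2_abelian (n := 2) isT As sbL3 sL3M.
have tbL4 : [~ t, b] \in 'L_4(G) by rewrite mem_commg_lcn ?(mem_gen2r genG).
have := lcn_cycle_join_step genG lcn2_abelian (n := 3) isT At tbL4 sL4M.
rewrite lcn6_eq1 joingG1 => /subset_leq_card le_L5.
have Ata : [~ t, a] \in A := lcn2_commg_lcn2 At Ga.
have {}le_L5 : #|'L_5(G)| <= p.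
  rewrite (leq_trans le_L5) // -orderE dvdn_leq ?prime_gt0 //.
  by rewrite order_lcn2 ?lcn2_commg_lcn2.
have le_L4 := leq_trans (subset_leq_card sL4M) (card_cycle_lcn2_join 5 Ata).
have := leq_trans le_p3_L4 le_L4.
rewrite expnS leq_pmul2l ?prime_gt0 // => /leq_trans/(_ le_L5).
by rewrite expnS expn1 leqNgt ltn_Pmull ?prime_gt1 ?prime_gt0.
Qed.

Lemma card_lcn4_le : #|'L_4(G)| <= p ^ 2.
Proof.
have [a [b genG]] := exists_gen2.
have [Ga Gb] := (mem_gen2l genG, mem_gen2r genG).
have genG' : <<[set b; a]>> = G by rewrite setUC.
set c := [~ a, b]; have Ac : c \in A := mem_commg_lcn2 Ga Gb.
have notL3c : c \notin 'L_3(G) := commg_gen2_notin_lcn3 genG.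
have [caL4 | notL4ca] := boolP ([~ c, a] \in 'L_4(G)); last first.
  by apply: (card_lcn4_le_of_commg genG Ac notL4ca); rewrite mem_commg_lcn.
have [cbL4 | notL4cb] := boolP ([~ c, b] \in 'L_4(G)); last first.
  by apply: (card_lcn4_le_of_commg genG' Ac notL4cb); rewrite mem_commg_lcn.
have/negP[] := lcn_strict (k := 3) isT.
exact: (lcn3_sub_commg genG Ac notL3c Ac notL3c (subxx _) caL4 cbL4).
Qed.

Lemma card_lcn5_lcn4 : p * #|'L_5(G)| <= #|'L_4(G)|.
Proof.
apply: (proper_card_pgroup pr_p pgroupG (lcn_sub 4 G)).
by rewrite properE lcn_subS lcn_strict.
Qed.

Lemma card_lcn5 : #|'L_5(G)| = p.
Proof.
have le_p_L5 : p <= #|'L_5(G)|.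
  rewrite -(expn1 p) (card_pgroup_ltn pr_p pgroupG) ?lcn_sub //.
  by rewrite expn0 cardG_gt1 lcn5_neq1.
apply/eqP; rewrite eqn_leq le_p_L5 andbT -(leq_pmul2l (prime_gt0 pr_p)).
rewrite (leq_trans card_lcn5_lcn4) //.
by rewrite (leq_trans card_lcn4_le) // expnS expn1.
Qed.

Lemma card_lcn4 : #|'L_4(G)| = (p ^ 2)%N.
Proof.
apply/eqP; rewrite eqn_leq card_lcn4_le /=.
by rewrite (leq_trans _ card_lcn5_lcn4) // card_lcn5.
Qed.

Definition center_mod_lcn5 := coset 'L_5(G) @*^-1 'Z(G / 'L_5(G)).
Local Notation Q := center_mod_lcn5.

Lemma center_mod_lcn5P x :
  reflect (x \in G /\ {in G, forall g, [~ x, g] \in 'L_5(G)}) (x \in Q).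
Proof.
have sQG : Q \subset G.
  by rewrite -(quotientGK (lcn_normal 5 G)) morphpreS ?center_sub.
have -> : (x \in Q) = (x \in G) && ([~: [set x], G] \subset 'L_5(G)).
  rewrite -(setIidPr sQG) inE; case Gx: (x \in G) => //=.
  have nL5x := subsetP (lcn_norm 5 G) x Gx.
  rewrite -sub1set -sub_quotient_pre -?quotient_cents2 ?sub1set ?lcn_norm //.
  by rewrite subsetI quotientS ?sub1set.
by apply: (iffP andP) => [[Gx /commg1G_subP] | [Gx /commg1G_subP]].
Qed.

Lemma lcn4_sub_center_mod : 'L_4(G) \subset Q.
Proof.
apply/subsetP=> x L4x; apply/center_mod_lcn5P; split=> [|g Gg].
  exact: subsetP (lcn_sub 4 G) x L4x.
exact: mem_commg_lcn.
Qed.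

Lemma center_mod_sub_lcn3 : Q \subset 'L_3(G).
Proof.
apply/subsetP=> u /center_mod_lcn5P[Gu uGL5].
have uGL k : k <= 5 -> {in G, forall g, [~ u, g] \in 'L_k(G)}.
  by move=> le_k5 g Gg; apply: subsetP (lcn_sub_leq G le_k5) _ (uGL5 g Gg).
have Au : u \in A by apply: mem_lcn2_of_commg => // g Gg; rewrite uGL.
apply: contraT => notL3u; have [a [b genG]] := exists_gen2.
have/negP[] := lcn_strict (k := 3) isT.
apply: (lcn3_sub_commg genG Au notL3u Au notL3u (subxx _)).
  by rewrite uGL ?(mem_gen2l genG).
by rewrite uGL ?(mem_gen2r genG).
Qed.

Lemma lcn3_not_sub_center_mod : ~~ ('L_3(G) \subset Q).
Proof.
apply/negP=> sL3Q; have/negP[] := lcn_strict (k := 4) isT.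
rewrite (lcnSn 2) gen_subG; apply/subsetP=> _ /imset2P[x g L3x Gg ->].
by have /center_mod_lcn5P[_ ->] := subsetP sL3Q x L3x.
Qed.

Lemma card_center_mod_le : #|Q| <= p ^ 3.
Proof.
have ltQL3 : Q \proper 'L_3(G).
  by rewrite properE center_mod_sub_lcn3 lcn3_not_sub_center_mod.
have := proper_card_pgroup pr_p pgroupG (lcn_sub 3 G) ltQL3.
by rewrite card_lcn3 expnS leq_pmul2l ?prime_gt0.
Qed.

(* P = L_3 :&: [~ _, a]^-1(L_5) has index at most |L_4 : L_5| = p in L_3,
   and P <= Q: for u in P write [u, b] = w^i r with r in L_5; then
   1 = [u, a, b] = [u, b, a] = [w, a]^i forces w^i = 1. *)
Lemma card_center_mod_ge_gen2 a b w : <<[set a; b]>> = G -> w \in 'L_4(G) ->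
  [~ w, a] != 1 -> p ^ 3 <= #|Q|.
Proof.
move=> genG L4w wa_neq1; have [Ga Gb] := (mem_gen2l genG, mem_gen2r genG).
have Aw : w \in A by apply: subsetP (lcn_sub_leq G _) _ L4w.
have notL5w : w \notin 'L_5(G) by apply: contra wa_neq1 => /commg_lcn5->.
have sL4M : 'L_4(G) \subset <[w]> <*> 'L_5(G).
  apply: (lcn_sub_cycle_join pr_p pgroupG L4w notL5w).
  by rewrite card_lcn4 card_lcn5 expnS expn1.
have ord_wa : #[ [~ w, a] ] = p.
  apply/(prime_nt_dvdP pr_p); rewrite ?order_eq1 ?order_lcn2 //.
  exact: lcn2_commg_lcn2.
set f := comm_morph lcn2_abelian Ga; set P := 'L_3(G) :&: f @*^-1 'L_5(G).
have sPQ : P \subset Q.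
  apply/subsetP=> u /setIP[L3u /morphpreP[Au]]; rewrite comm_morphE => uaL5.
  apply/center_mod_lcn5P; split; first exact: subsetP (lcn_sub 3 G) u L3u.
  apply: (commg_gen2_mem genG (lcn_norm 5 G) uaL5).
  have: [~ u, b] \in <[w]> <*> 'L_5(G) by rewrite (subsetP sL4M) ?mem_commg_lcn.
  rewrite norm_joinEl ?cycle_norm_lcn ?(subsetP (lcn_sub 2 G)) //.
  case/mulsgP=> _ r /cycleP[i ->] L5r def_ub.
  have Ar : r \in A by apply: subsetP (lcn_sub_leq G _) _ L5r.
  have : [~ w ^+ i * r, a] = 1.
    by rewrite -def_ub (commg_lcn2C lcn2_abelian Au Gb Ga) commg_lcn5.
  rewrite -(comm_morphE lcn2_abelian Ga) morphM ?groupX // morphX //.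
  rewrite !comm_morphE (commg_lcn5 L5r Ga) mulg1 => /eqP.
  rewrite -order_dvdn ord_wa => p_dv_i.
  have wi1 : w ^+ i = 1.
    by apply/eqP; rewrite -order_dvdn (dvdn_trans (order_lcn2 Aw)).
  by rewrite def_ub wi1 mul1g.
have sfL3L4 : f @* 'L_3(G) \subset 'L_4(G).
  by apply/subsetP=> _ /morphimP[u _ L3u ->]; rewrite comm_morphE mem_commg_lcn.
have sL3A : 'L_3(G) \subset A := lcn_subS 2 G.
have := card_morphpre_mul sL3A sfL3L4 (lcn_subS 4 G).
rewrite card_lcn3 card_lcn5 card_lcn4 -expnSr -[5]/(2 + 3) expnD.
rewrite leq_pmul2l ?expn_gt0 ?prime_gt0 // => /leq_trans; apply.
exact: subset_leq_card.
Qed.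

Lemma card_center_mod : #|Q| = (p ^ 3)%N.
Proof.
apply/eqP; rewrite eqn_leq card_center_mod_le /=.
have [a [b genG]] := exists_gen2.
have genG' : <<[set b; a]>> = G by rewrite setUC.
pose moves w := ([~ w, a] != 1) || ([~ w, b] != 1).
case: (pickP [pred w in 'L_4(G) | moves w]) => [w | none].
  case/andP=> L4w /orP[wa_neq1 | wb_neq1].
    exact: card_center_mod_ge_gen2 genG L4w wa_neq1.
  exact: card_center_mod_ge_gen2 genG' L4w wb_neq1.
suff sL5_1 : 'L_5(G) \subset [1] by case/negP: lcn5_neq1; apply/eqP/trivgP.
rewrite (lcnSn 3) gen_subG.
apply/subsetP=> _ /imset2P[w g L4w Gg ->].
have /norP[/negbNE/eqP wa /negbNE/eqP wb] : ~~ moves w.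
  by apply/negbT; have := none w; rewrite /= L4w.
by apply: (commg_gen2_mem genG (norms1 G)); rewrite ?wa ?wb ?group1.
Qed.

Lemma card_center_quotient : #|'Z(G / 'L_5(G))| = (p ^ 2)%N.
Proof.
have sL5Q : 'L_5(G) \subset Q.
  exact: subset_trans (lcn_subS 4 G) lcn4_sub_center_mod.
rewrite -(cosetpreK 'Z(G / 'L_5(G))) -/Q card_quotient ?morphpre_sub //.
apply/eqP; rewrite -(eqn_pmul2l (prime_gt0 pr_p)) -{1}card_lcn5 Lagrange //.
by rewrite card_center_mod expnS.
Qed.

Lemma center_sub_center_mod : 'Z(G) \subset Q.
Proof.
apply/subsetP=> x Zx; apply/center_mod_lcn5P; split=> [|g Gg].
  exact: subsetP (center_sub G) x Zx.
by rewrite (commg_center Zx Gg) group1.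
Qed.

Lemma center_mod_sub_ucn2 : Q \subset 'Z_2(G).
Proof.
apply/subsetP=> x /center_mod_lcn5P[Gx xGL5]; apply/ucnSP; split=> // g Gg.
apply/ucnSP; split=> [|h Gh]; first exact: subsetP (lcn_sub 5 G) _ (xGL5 g Gg).
by rewrite ucn0 (commg_lcn5 (xGL5 g Gg) Gh) group1.
Qed.

Lemma ucn2_sub_lcn3 : 'Z_2(G) \subset 'L_3(G).
Proof.
apply/subsetP=> u /ucnSP[Gu]; rewrite ucn1 => uGZ.
have uGQ g : g \in G -> [~ u, g] \in Q.
  by move/uGZ; apply: subsetP center_sub_center_mod _.
have Au : u \in A.
  apply: mem_lcn2_of_commg => // g /uGQ.
  exact: subsetP center_mod_sub_lcn3 _.
apply: contraT => notL3u; have [a [b genG]] := exists_gen2.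
have/negP[] := lcn3_not_sub_center_mod.
apply: (lcn3_sub_commg genG Au notL3u Au notL3u lcn4_sub_center_mod).
  exact/uGQ/(mem_gen2l genG).
exact/uGQ/(mem_gen2r genG).
Qed.

Lemma lcn3_not_sub_ucn2 : ~~ ('L_3(G) \subset 'Z_2(G)).
Proof.
apply/negP=> sL3Z2; have sL4Z : 'L_4(G) \subset 'Z(G).
  rewrite (lcnSn 2) gen_subG; apply/subsetP=> _ /imset2P[x g L3x Gg ->].
  by have /ucnSP[_ /(_ g Gg)] := subsetP sL3Z2 x L3x; rewrite ucn1.
suff sL5_1 : 'L_5(G) \subset [1] by case/negP: lcn5_neq1; apply/eqP/trivgP.
rewrite (lcnSn 3) gen_subG; apply/subsetP=> _ /imset2P[x g L4x Gg ->].
by rewrite (commg_center (subsetP sL4Z x L4x) Gg) set11.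
Qed.

Lemma card_ucn2 : #|'Z_2(G)| = (p ^ 3)%N.
Proof.
apply/eqP; rewrite eqn_leq -{2}card_center_mod.
rewrite subset_leq_card ?center_mod_sub_ucn2 // andbT.
have ltZ2L3 : 'Z_2(G) \proper 'L_3(G).
  by rewrite properE ucn2_sub_lcn3 lcn3_not_sub_ucn2.
have := proper_card_pgroup pr_p pgroupG (lcn_sub 3 G) ltZ2L3.
by rewrite card_lcn3 expnS leq_pmul2l ?prime_gt0.
Qed.

Lemma lcn3_sub_commg_mul a b : <<[set a; b]>> = G ->
  'L_3(G) \subset [set [~ [~ a, b], f] | f in G] * 'L_4(G).
Proof.
move=> genG; have [Ga Gb] := (mem_gen2l genG, mem_gen2r genG).
have Ac : [~ a, b] \in A := mem_commg_lcn2 Ga Gb.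
have Gc : [~ a, b] \in G := subsetP (lcn_sub 2 G) _ Ac.
have cGGL4 : {in G &, forall h g, [~ [~ a, b], h, g] \in 'L_4(G)}.
  by move=> h g Gh Gg; rewrite !mem_commg_lcn.
have sL4A : 'L_4(G) \subset A by apply: lcn_sub_leq.
pose T := Group (commg_mul_group_set lcn2_abelian Gc sL4A cGGL4).
have cT g : g \in G -> [~ [~ a, b], g] \in T.
  by move=> Gg; rewrite -[_ _ g]mulg1 mem_mulg ?imset_f.
have sL4T : 'L_4(G) \subset T.
  apply/subsetP=> x L4x.
  by rewrite -[x]mul1g mem_mulg // -(commg1 [~ a, b]) imset_f.
have sAM := lcn2_sub_cycle_commg genG.
have commT u g : g \in G -> u \in A -> [~ u, g] \in T.
  move=> Gg Au; apply: (commg_cycle_lcn_mem lcn2_abelian Gg _ Ac) sL4T => //.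
    exact: subsetP sAM u Au.
  exact: cT.
apply/subsetP=> x /(mem_lcn3_gen2 genG lcn2_abelian)[u Au [v Av ->]].
by rewrite (@groupM _ T) ?commT.
Qed.

Lemma exists_commg_center_mod a b : <<[set a; b]>> = G ->
  exists2 e, e \in G &
    ([~ [~ a, b], e] \in Q) && ([~ [~ a, b], e] \notin 'L_4(G)).
Proof.
move=> genG; have /subsetPn[t Qt notL4t] : ~~ (Q \subset 'L_4(G)).
  apply/negP=> /subset_leq_card; rewrite card_center_mod card_lcn4.
  by rewrite leq_exp2l ?prime_gt1.
have L3t := subsetP center_mod_sub_lcn3 t Qt.
have sL3T := lcn3_sub_commg_mul genG.
case/mulsgP: (subsetP sL3T t L3t) => _ r /imsetP[e Ge ->] L4r def_t.
have def_ce : [~ [~ a, b], e] = t * r^-1 by rewrite def_t mulgK.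
have Qr := subsetP lcn4_sub_center_mod r L4r.
by exists e; rewrite // def_ce groupM ?groupV //= groupMr ?groupV.
Qed.

Lemma comm_morphim_lcn3 a b e (Ge : e \in G) : <<[set a; b]>> = G ->
  [~ [~ a, b], e] \in Q ->
  comm_morph lcn2_abelian Ge @* 'L_3(G) \subset 'L_5(G).
Proof.
move=> genG /center_mod_lcn5P[_ ceGL5].
apply/subsetP=> _ /morphimP[t _ L3t ->]; rewrite comm_morphE.
have sL3T := lcn3_sub_commg_mul genG.
case/mulsgP: (subsetP sL3T t L3t) => _ r /imsetP[f Gf ->] L4r ->.
have Ac := mem_commg_lcn2 (mem_gen2l genG) (mem_gen2r genG).
have Ar : r \in A by apply: subsetP (lcn_sub_leq G _) r L4r.
rewrite -(comm_morphE lcn2_abelian Ge) (morphM _ (lcn2_commg_lcn2 Ac Gf) Ar).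
rewrite !comm_morphE (commg_lcn2C lcn2_abelian Ac Gf Ge).
by rewrite groupM ?ceGL5 ?mem_commg_lcn.
Qed.

Lemma card_comm_morphim_lcn2 e (Ge : e \in G) :
  comm_morph lcn2_abelian Ge @* 'L_3(G) \subset 'L_5(G) ->
  #|comm_morph lcn2_abelian Ge @* A| <= p ^ 2.
Proof.
move=> /subset_leq_card; rewrite card_lcn5 => le_fL3.
set f := comm_morph lcn2_abelian Ge.
have := card_morphim_subset f (lcn_subS 2 G) (subxx A).
move/leq_trans/(_ (leq_mul (leqnn _) le_fL3)); rewrite card_lcn3 oA -expnSr.
by rewrite -[6]/(2 + 4) expnD leq_pmul2r ?expn_gt0 ?prime_gt0.
Qed.

Lemma lcn3_sub_of_commutator a b e t (Ge : e \in G) (N : {group gT}) :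
  <<[set a; b]>> = G -> e \notin A -> t \in commutator_set G ->
  t \in 'L_3(G) -> t \notin 'L_4(G) ->
  t \notin comm_morph lcn2_abelian Ge @* A ->
  'L_4(G) \subset N -> [~ [~ a, b], e] \in N -> t \in N -> 'L_3(G) \subset N.
Proof.
move=> genG notAe /imset2P[g h Gg Gh ->] L3t notL4t notft sL4N ceN tN.
have [f Gf /andP[Mg Mh]] := commg_lcn3_cycle_join Gg Gh L3t.
have /morphimP[u _ Au] := commg_cycle_join lcn2_abelian Gf Mg Mh.
rewrite comm_morphE => def_t.
have [Mf | notMf] := boolP (f \in <[e]> <*> A).
  have sMfMe : <[f]> <*> A \subset <[e]> <*> A.
    by rewrite join_subG cycle_subG Mf joing_subr.
  by case/negP: notft; rewrite commg_cycle_join ?(subsetP sMfMe).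
have genEF := gen2_of_notin Ge Gf notAe notMf.
have notL3u : u \notin 'L_3(G).
  by apply: contra notL4t => L3u; rewrite def_t mem_commg_lcn.
have Ac := mem_commg_lcn2 (mem_gen2l genG) (mem_gen2r genG).
have notL3c := commg_gen2_notin_lcn3 genG.
apply: (lcn3_sub_commg genEF Ac notL3c Au notL3u sL4N ceN).
by rewrite -def_t.
Qed.

Lemma card_cycle_lcn4_join x : x \in 'L_3(G) -> x \notin 'L_4(G) ->
  #|<[x]> <*> 'L_4(G)| = (p ^ 3)%N.
Proof.
move=> L3x notL4x; set L := <[x]> <*> 'L_4(G).
have Ax : x \in A by apply: subsetP (lcn_sub_leq G _) _ L3x.
have sLG : L \subset G.
  by rewrite join_subG cycle_subG lcn_sub (subsetP (lcn_sub 3 G)).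
have ltL4L : 'L_4(G) \proper L.
  rewrite properE joing_subr; apply: contra notL4x => /subsetP; apply.
  exact: subsetP (joing_subl _ _) _ (cycle_id _).
have le_L := card_cycle_lcn2_join 4 Ax.
have ge_L := proper_card_pgroup pr_p pgroupG sLG ltL4L.
rewrite card_lcn4 -expnS in le_L ge_L.
by apply/eqP; rewrite eqn_leq le_L ge_L.
Qed.

Lemma exists_noncommutator : 2 < p ->
  exists2 t, t \in A & (t != 1) && (t \notin commutator_set G).
Proof.
move=> p_gt2.
have [a [b genG]] := exists_gen2.
have [Ga Gb] := (mem_gen2l genG, mem_gen2r genG).
have [e Ge /andP[ceQ notL4ce]] := exists_commg_center_mod genG.
have Ac : [~ a, b] \in A := mem_commg_lcn2 Ga Gb.
have L3ce : [~ [~ a, b], e] \in 'L_3(G) by rewrite mem_commg_lcn.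
have notAe : e \notin A.
  apply: contra notL4ce => Ae.
  by rewrite (commg_lcn2 lcn2_abelian Ac Ae) group1.
set L := <[ [~ [~ a, b], e] ]> <*> 'L_4(G).
have sLL3 : L \subset 'L_3(G) by rewrite join_subG cycle_subG L3ce lcn_subS.
have oL : #|L| = (p ^ 3)%N := card_cycle_lcn4_join L3ce notL4ce.
have le_fA := card_comm_morphim_lcn2 (comm_morphim_lcn3 Ge genG ceQ).
set fA := comm_morph lcn2_abelian Ge @* A in le_fA *.
have /subsetPn[t Lt] : ~~ (L \subset 'L_4(G) :|: fA).
  apply/negP=> /subset_leq_card; apply/negP; rewrite -ltnNge.
  rewrite oL; apply: leq_ltn_trans (leq_card_setU _ _) _.
  rewrite card_lcn4 (leq_ltn_trans (leq_add (leqnn _) le_fA)) // addnn -mul2n.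
  by rewrite (expnS p 2) ltn_pmul2r ?expn_gt0 ?prime_gt0.
rewrite inE negb_or => /andP[notL4t notft]; have L3t := subsetP sLL3 t Lt.
exists t; first by apply: (subsetP (lcn_sub_leq G _) t L3t).
apply/andP; split; first by apply: contraNneq notL4t => ->; apply: group1.
apply/negP=> Kt.
have ceL : [~ [~ a, b], e] \in L := subsetP (joing_subl _ _) _ (cycle_id _).
have sL4L : 'L_4(G) \subset L := joing_subr _ _.
have sL3L := lcn3_sub_of_commutator genG notAe Kt L3t notL4t notft sL4L ceL Lt.
have := subset_leq_card sL3L.
by rewrite card_lcn3 oL leq_exp2l ?prime_gt1.
Qed.

Lemma lcn2_sub_commg_mul a b : <<[set a; b]>> = G ->
  A \subset [set [~ a, f] | f in G] * 'L_3(G).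
Proof.
move=> genG; have [Ga Gb] := (mem_gen2l genG, mem_gen2r genG).
have aGGL3 : {in G &, forall h g, [~ a, h, g] \in 'L_3(G)}.
  by move=> h g Gh Gg; rewrite mem_commg_lcn ?mem_commg_lcn2.
pose T := Group (commg_mul_group_set lcn2_abelian Ga (lcn_subS 2 G) aGGL3).
have sL3T : 'L_3(G) \subset T.
  by apply/subsetP=> x L3x; rewrite -[x]mul1g mem_mulg // -(commg1 a) imset_f.
suff sMT : <[ [~ a, b] ]> <*> 'L_3(G) \subset T.
  exact: subset_trans (lcn2_sub_cycle_commg genG) sMT.
by rewrite join_subG sL3T cycle_subG andbT -[_ _ b]mulg1 mem_mulg ?imset_f.
Qed.

Lemma commutator_width2 : commutator_width_le G 2.
Proof.
move=> x Ax; have [a [b genG]] := exists_gen2.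
have [Ga Gb] := (mem_gen2l genG, mem_gen2r genG).
have sAT := lcn2_sub_commg_mul genG.
case/mulsgP: (subsetP sAT x Ax) => _ r /imsetP[h Gh ->] L3r ->.
have Aah := mem_commg_lcn2 Ga Gh.
case/(mem_lcn3_gen2 genG lcn2_abelian): L3r => u Au [v Av ->].
have [Gu Gv] := (subsetP (lcn_sub 2 G) u Au, subsetP (lcn_sub 2 G) v Av).
exists [:: (a, h * u^-1); (b, v^-1)]; split=> /=; first by [].
  by rewrite Ga Gb groupV Gv groupM ?groupV.
rewrite !big_cons big_nil mulg1 commgMJ.
rewrite (commgV_lcn2 lcn2_abelian Au Ga) (commgV_lcn2 lcn2_abelian Av Gb).
rewrite (conjg_lcn2 lcn2_abelian Aah (groupVr Au)) mulgA.
by rewrite (centsP lcn2_abelian _ Aah _ (lcn2_commg_lcn2 Au Ga)).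
Qed.

End Proposition33.

Theorem proposition3p3 (gT : finGroupType) (G : {group gT}) (p : nat) :
  prime p -> 5 <= p ->
  #|G| = (p ^ 7)%N ->
  nil_class G = 5 ->
  p.-abelem 'L_2(G) -> #|'L_2(G)| = (p ^ 5)%N ->
  [/\ #|'L_5(G)| = p,
      #|'Z(G / 'L_5(G))| = (p ^ 2)%N /\ #|'Z_2(G)| = (p ^ 3)%N,
      commutator_set G != 'L_2(G)
    & commutator_length_is G 2].
Proof.
move=> pr_p p_ge5 oG cl5 eA oA.
have p_gt2 : 2 < p := ltnW (ltnW p_ge5).
have [t At /andP[t_neq1 notKt]] := exists_noncommutator pr_p oG cl5 eA oA p_gt2.
split.
- exact: card_lcn5 pr_p oG cl5 eA oA.
- split; first exact: card_center_quotient pr_p oG cl5 eA oA.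
  exact: card_ucn2 pr_p oG cl5 eA oA.
- by apply: contraNneq notKt => ->.
split=> [//||k k_gt0 lt_k2]; first exact: commutator_width2 pr_p oG cl5 eA oA.
have -> : k = 1%N by apply/eqP; rewrite eqn_leq -ltnS lt_k2.
exact: not_commutator_width1 At t_neq1 notKt.
Qed.
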